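(* Let $p$ be a prime and let $f:\mathbb{Z}_p\times\mathbb{Z}_p\to\mathbb{Z}_p$ be additively inseparable. Write $f(x,y)=\sum_{i,j=0}^{p-1}\lambda_{i,j}x^iy^j$ with $\lambda_{i,j}\in\mathbb{Z}_p$. Then $\Delta(f)\ge 2$. Moreover, $2^{\Delta(f)-2}$ copies of $P^f$, together with local processing and without communication, suffice to simulate one copy of $PR_p$ exactly.
   Context: Let $p$ be a prime. All arithmetic on elements of $\mathbb{Z}_p$ is modulo $p$. A box is a conditional probability distribution $P(a,b\mid x,y)$ with $a,b,x,y\in\mathbb{Z}_p$. It is shared by Alice, who supplies $x$ and receives $a$, and Bob, who supplies $y$ and receives $b$. Different copies act independently. $PR_p(a,b\mid x,y)=1/p$ if $a-b=xy$, and $0$ otherwise. For $f:\mathbb{Z}_p\times\mathbb{Z}_p\to\mathbb{Z}_p$, the functional box is $P^f(a,b\mid x,y)=1/p$ if $a-b=f(x,y)$, and $0$ otherwise. A function $f$ is additively separable if $f(x,y)=g(x)+h(y)$ for some $g,h:\mathbb{Z}_p\to\mathbb{Z}_p$. Otherwise it is additively inseparable. Every $f$ has a unique representation $f(x,y)=\sum_{i,j=0}^{p-1}\lambda_{i,j}x^iy^j$. Define $$\Delta(f)=\max_{1\le i,j\le p-1}\mathbb{I}_{\lambda_{i,j}\neq0}\,(i+j),$$ the maximal total degree of a monomial with nonzero coefficient that is divisible by $xy$. It is $0$ if there is no such monomial. *)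

(* Z_p is modelled as 'F_p (p prime); probabilities are rationals. *)
From HB Require Import structures.
From mathcomp Require Import all_boot all_order all_algebra.
Set Implicit Arguments. Unset Strict Implicit. Unset Printing Implicit Defensive.
Import Order.TTheory GRing.Theory Num.Theory.
Local Open Scope ring_scope.

(* A box P a b x y = P(a,b | x,y). *)
Definition box (p : nat) := 'F_p -> 'F_p -> 'F_p -> 'F_p -> rat.

Definition PRbox (p : nat) : box p :=
  fun a b x y => if a - b == x * y then (p%:R)^-1 else 0.

Arguments PRbox : clear implicits.

Definition funbox (p : nat) (f : 'F_p -> 'F_p -> 'F_p) : box p :=
  fun a b x y => if a - b == f x y then (p%:R)^-1 else 0.

Definition add_separable (p : nat) (f : 'F_p -> 'F_p -> 'F_p) : Prop :=
  exists g h : 'F_p -> 'F_p, forall x y, f x y = g x + h y.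

Definition poly_rep (p : nat) (f : 'F_p -> 'F_p -> 'F_p)
  (lam : 'I_p -> 'I_p -> 'F_p) : Prop :=
  forall x y, f x y = \sum_(i < p) \sum_(j < p) lam i j * x ^+ i * y ^+ j.

(* Delta: maximal i+j over 1 <= i,j <= p-1 with lam_{i,j} <> 0 (0 if none). *)
Definition Delta (p : nat) (lam : 'I_p -> 'I_p -> 'F_p) : nat :=
  (\max_(i < p) \max_(j < p | (0 < i)%N && (0 < j)%N && (lam i j != 0%R)) (i + j))%N.

(* A local strategy for box inputs: the input to box k may only depend on
   the outputs of boxes j < k (causality). *)
Definition causal (F : Type) (n : nat) (s : 'I_n -> {ffun 'I_n -> F} -> F) : Prop :=
  forall (k : 'I_n) (u v : {ffun 'I_n -> F}),
    (forall j : 'I_n, (j < k)%N -> u j = v j) -> s k u = s k v.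

(* Probability that the local wiring (shared randomness (T,w), Alice's input
   maps xin / output map outA, Bob's yin / outB) applied to n copies of P
   yields outputs (a,b) on inputs (x,y). Boxes are used in order 0..n-1. *)
Definition wiring_prob (p n : nat) (P : box p) (T : finType) (w : T -> rat)
  (xin : T -> 'F_p -> 'I_n -> {ffun 'I_n -> 'F_p} -> 'F_p)
  (yin : T -> 'F_p -> 'I_n -> {ffun 'I_n -> 'F_p} -> 'F_p)
  (outA : T -> 'F_p -> {ffun 'I_n -> 'F_p} -> 'F_p)
  (outB : T -> 'F_p -> {ffun 'I_n -> 'F_p} -> 'F_p)
  (a b x y : 'F_p) : rat :=
  \sum_(l : T) w l *
    \sum_(av : {ffun 'I_n -> 'F_p}) \sum_(bv : {ffun 'I_n -> 'F_p})
      (if (outA l x av == a) && (outB l y bv == b)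
       then \prod_(k < n) P (av k) (bv k) (xin l x k av) (yin l y k bv)
       else 0).

Definition simulates (p n : nat) (P Q : box p) : Prop :=
  exists (T : finType) (w : T -> rat)
    (xin : T -> 'F_p -> 'I_n -> {ffun 'I_n -> 'F_p} -> 'F_p)
    (yin : T -> 'F_p -> 'I_n -> {ffun 'I_n -> 'F_p} -> 'F_p)
    (outA : T -> 'F_p -> {ffun 'I_n -> 'F_p} -> 'F_p)
    (outB : T -> 'F_p -> {ffun 'I_n -> 'F_p} -> 'F_p),
    [/\ (forall l, 0 <= w l), \sum_(l : T) w l = 1,
        (forall l x, causal (xin l x)),
        (forall l y, causal (yin l y)) &
        (forall a b x y, wiring_prob P w xin yin outA outB a b x y = Q a b x y)].

(* The simulation only needs a relation  sum_k e_k f(al_k x, be_k y) = lm xy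
   + G(x) + H(y)  with n terms: Alice and Bob feed al_k x and be_k y into the
   k-th box and output affine combinations of their box outputs (last part).
   Such relations are built by induction on Delta: if Delta = 2 the mixed part
   f(x,y) - f(x,0) - f(0,y) + f(0,0) is already lm xy; otherwise a top-degree
   mixed monomial x^i y^j has i >= 2 or j >= 2, and the finite difference in
   that variable, f(x+1,y) - f(x,y), has Delta one smaller, while a relation
   for the difference gives one for f with twice as many terms.  The bound
   Delta >= 2 holds since a function without mixed monomials is separable. *)

From HB Require Import structures.
From mathcomp Require Import all_boot all_order all_algebra.
From mathcomp Require Import ring zify.
Import Order.TTheory GRing.Theory Num.Theory.
Set Implicit Arguments. Unset Strict Implicit. Unset Printing Implicit Defensive.
Local Open Scope ring_scope.

Section MixedMonomials.
Variable p : nat.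
Implicit Types (lam : 'I_p -> 'I_p -> 'F_p) (f : 'F_p -> 'F_p -> 'F_p).

Definition mixed lam (ij : 'I_p * 'I_p) : bool :=
  [&& (0 < ij.1)%N, (0 < ij.2)%N & lam ij.1 ij.2 != 0].

Lemma Delta_pairs lam : Delta lam = (\max_(ij | mixed lam ij) (ij.1 + ij.2))%N.
Proof.
rewrite /Delta pair_big_dep; apply: eq_bigl => -[i j] /=.
by rewrite /mixed andbA.
Qed.

Lemma Delta_ge lam ij : mixed lam ij -> (ij.1 + ij.2 <= Delta lam)%N.
Proof. by rewrite Delta_pairs; apply: (leq_bigmax_cond (F := fun ij => _ + _)%N). Qed.

Lemma Delta_le lam d :
  (forall ij, mixed lam ij -> (ij.1 + ij.2 <= d)%N) -> (Delta lam <= d)%N.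
Proof. by rewrite Delta_pairs => /bigmax_leqP. Qed.

Lemma Delta_attained lam :
  (0 < Delta lam)%N -> exists2 ij, mixed lam ij & (ij.1 + ij.2)%N = Delta lam.
Proof.
rewrite Delta_pairs; case: (pickP (mixed lam)) => [ij0 hij0 _ | none].
  by rewrite (bigop.bigmax_eq_arg ij0) //; case: arg_maxnP => // ij hij _; exists ij.
by rewrite big_pred0.
Qed.

Lemma mixed_part_expansion f lam : poly_rep f lam -> forall x y,
  f x y - f x 0 - f 0 y + f 0 0 =
  \sum_(ij | mixed lam ij) lam ij.1 ij.2 * x ^+ ij.1 * y ^+ ij.2.
Proof.
move=> h x y; transitivity (\sum_i \sum_j
    (if mixed lam (i, j) then lam i j * x ^+ i * y ^+ j else 0)); last first.
  by rewrite pair_bigA [RHS]big_mkcond; apply: eq_bigr => -[].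
rewrite !h -!sumrB -big_split; apply: eq_bigr => i _.
rewrite -!sumrB -big_split; apply: eq_bigr => j _.
rewrite /mixed /=; case: i => -[|i] hi /=; first by rewrite !expr0 !mulr1; ring.
case: j => -[|j] hj /=; first by rewrite !expr0 !mulr1; ring.
by case: eqP => [->|_]; rewrite !expr0n /= ?mul0r; ring.
Qed.

Lemma separable_of_no_mixed f lam :
  poly_rep f lam -> (forall ij, ~~ mixed lam ij) -> add_separable f.
Proof.
move=> h none; exists (fun x => f x 0), (fun y => f 0 y - f 0 0) => x y.
have := mixed_part_expansion h x y; rewrite big_pred0 => [e|ij]; last exact/negbTE.
have -> : f x y = (f x y - f x 0 - f 0 y + f 0 0) + (f x 0 + (f 0 y - f 0 0)).
  by ring.
by rewrite e add0r.
Qed.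

(* Mixed monomials have degree at least 2, so inseparable f has Delta >= 2. *)
Lemma Delta_ge2 f lam : poly_rep f lam -> ~ add_separable f -> (2 <= Delta lam)%N.
Proof.
move=> h hf; case: (boolP [exists ij, mixed lam ij]) => [/existsP[ij hij] | /existsPn none].
  by apply: leq_trans (Delta_ge hij); case/and3P: hij; lia.
by case: hf; exact: separable_of_no_mixed h none.
Qed.

Lemma poly_rep_transpose f lam :
  poly_rep f lam -> poly_rep (fun x y => f y x) (fun i j => lam j i).
Proof.
move=> h x y; rewrite h exchange_big /=.
by apply: eq_bigr => i _; apply: eq_bigr => j _; rewrite mulrAC.
Qed.

Lemma mixed_transpose lam i j : mixed (fun i j => lam j i) (j, i) = mixed lam (i, j).
Proof. by rewrite /mixed /= andbCA. Qed.

Lemma Delta_transpose lam : Delta (fun i j => lam j i) = Delta lam.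
Proof.
apply/eqP; rewrite eqn_leq; apply/andP; split; apply: Delta_le => -[i j] /= hm.
  by rewrite addnC; apply: (Delta_ge (ij := (j, i))); rewrite mixed_transpose.
by rewrite addnC; apply: (Delta_ge (ij := (j, i))); rewrite -mixed_transpose.
Qed.

(* If Delta = 2, the only mixed monomial is xy, so the mixed part is a
   nonzero multiple of xy. *)
Lemma mixed_part_of_Delta2 f lam : poly_rep f lam -> Delta lam = 2%N ->
  exists2 lm, lm != 0 & forall x y, f x y - f x 0 - f 0 y + f 0 0 = lm * x * y.
Proof.
move=> h hD; have Dpos : (0 < Delta lam)%N by rewrite hD.
have [ij0 hm0 _] := Delta_attained Dpos.
have deg1 ij : mixed lam ij -> ij.1 = 1%N :> nat /\ ij.2 = 1%N :> nat.
  by move=> hm; have := Delta_ge hm; case/and3P: hm; rewrite hD; lia.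
have unique_mixed ij : mixed lam ij = (ij == ij0).
  apply/idP/eqP => [hm | ->] //; have [e1 e2] := deg1 _ hm; have [f1 f2] := deg1 _ hm0.
  case: ij ij0 e1 e2 f1 f2 {hm hm0} => [i j] [i0 j0] /= e1 e2 f1 f2.
  by congr pair; apply: val_inj => /=; lia.
exists (lam ij0.1 ij0.2); first by case/and3P: hm0.
move=> x y; rewrite (mixed_part_expansion h) (big_pred1 ij0) //.
by have [-> ->] := deg1 _ hm0; rewrite !expr1.
Qed.

End MixedMonomials.

Section FiniteDifference.
Variable p : nat.
Implicit Types (lam : 'I_p -> 'I_p -> 'F_p) (f : 'F_p -> 'F_p -> 'F_p).

(* Coefficients of (x + 1)^i - x^i. *)
Definition diff_coef (i k : 'I_p) : 'F_p := if (k < i)%N then ('C(i, k))%:R else 0.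

Lemma diff_pow (i : 'I_p) (x : 'F_p) :
  (x + 1) ^+ i - x ^+ i = \sum_(k < p) diff_coef i k * x ^+ k.
Proof.
rewrite exprD1n (big_ord_widen _ (fun k => x ^+ k *+ 'C(i, k)) (ltn_ord i)) big_mkcond /=.
rewrite (bigD1 i) //= [RHS](bigD1 i) //= leqnn binn mulr1n /diff_coef ltnn mul0r add0r.
rewrite addrAC subrr add0r; apply: eq_bigr => k hk; rewrite ltnS leq_eqVlt.
rewrite (negbTE (hk : (k != i :> nat))) /=.
by case: ifP; rewrite ?mulr_natl ?mul0r.
Qed.

Definition lam_diff lam (k j : 'I_p) : 'F_p := \sum_(i < p) lam i j * diff_coef i k.

Lemma poly_rep_diff f lam :
  poly_rep f lam -> poly_rep (fun x y => f (x + 1) y - f x y) (lam_diff lam).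
Proof.
move=> h x y; rewrite !h -sumrB; transitivity
  (\sum_(i < p) \sum_(j < p) \sum_(k < p) lam i j * diff_coef i k * x ^+ k * y ^+ j).
  apply: eq_bigr => i _; rewrite -sumrB; apply: eq_bigr => j _.
  rewrite -mulrBl -mulrBr diff_pow mulr_sumr mulr_suml.
  by apply: eq_bigr => k _; rewrite !mulrA.
under eq_bigr do rewrite exchange_big /=.
rewrite exchange_big /=; apply: eq_bigr => k _.
rewrite exchange_big /=; apply: eq_bigr => j _.
by rewrite /lam_diff !mulr_suml.
Qed.

(* Differencing in x lowers the degree in x of every mixed monomial. *)
Lemma Delta_diff_le lam : (Delta (lam_diff lam) <= (Delta lam).-1)%N.
Proof.
apply: Delta_le => -[k j] /and3P[/= hk hj hl].
have [i hi] : exists i, lam i j * diff_coef i k != 0.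
  apply/existsP; apply: contraR hl => /existsPn none.
  by rewrite /lam_diff big1 // => i _; apply/eqP; rewrite -[_ == 0]negbK none.
move: hi; rewrite /diff_coef; case: ifP => [hki | _]; last by rewrite mulr0 eqxx.
rewrite mulf_eq0 negb_or => /andP[hli _].
have : mixed lam (i, j) by rewrite /mixed /= hj hli (leq_ltn_trans _ hki).
by move/Delta_ge => /=; lia.
Qed.

(* A top-degree mixed monomial x^(k+1) y^j of f yields the mixed monomial
   x^k y^j in the difference, with coefficient (k + 1) lam_(k+1,j) != 0. *)
Lemma mixed_diff_top (hp : prime p) lam (i0 k j0 : 'I_p) :
  i0 = k.+1 :> nat -> (0 < k)%N -> mixed lam (i0, j0) ->
  (i0 + j0)%N = Delta lam -> mixed (lam_diff lam) (k, j0).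
Proof.
move=> hik hk hm0 top; have /and3P[_ /= hj0 hl0] := hm0.
rewrite /mixed /= hk hj0 /lam_diff (bigD1 i0) //= big1 ?addr0 => [|i hi].
  rewrite mulf_neq0 // /diff_coef ifT; last by rewrite hik.
  have -> : 'C(i0, k) = i0 by rewrite hik binSn.
  by rewrite -(dvdn_pcharf (pchar_Fp hp)) gtnNdvd ?ltn_ord // hik.
rewrite /diff_coef; case: ifP => [hki | _]; last by rewrite mulr0.
case: (eqVneq (lam i j0) 0) => [-> | hl]; first by rewrite mul0r.
have : mixed lam (i, j0) by rewrite /mixed /= hj0 hl; lia.
have : i != i0 :> nat by rewrite (inj_eq val_inj).
by move=> + /Delta_ge /=; lia.
Qed.

Lemma Delta_diff (hp : prime p) lam (i0 j0 : 'I_p) :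
  mixed lam (i0, j0) -> (1 < i0)%N -> (i0 + j0)%N = Delta lam ->
  Delta (lam_diff lam) = (Delta lam).-1.
Proof.
move=> hm0 hi0 top; apply/eqP; rewrite eqn_leq Delta_diff_le /=.
have hk : (i0.-1 < p)%N by rewrite (leq_ltn_trans (leq_pred _) (ltn_ord i0)).
have ik : i0 = (Ordinal hk).+1 :> nat by rewrite /= prednK // ltnW.
have k_gt0 : (0 < Ordinal hk)%N by rewrite /= -ltnS prednK // ltnW.
by move/Delta_ge: (mixed_diff_top hp ik k_gt0 hm0 top) => /=; lia.
Qed.

End FiniteDifference.

Section Combinations.
Variable p : nat.
Implicit Types (lam : 'I_p -> 'I_p -> 'F_p) (f g : 'F_p -> 'F_p -> 'F_p).

Definition xy_mod_sep g : Prop :=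
  exists lm (G H : 'F_p -> 'F_p), lm != 0 /\ forall x y, g x y = lm * x * y + G x + H y.

Lemma xy_not_separable lm (G H : 'F_p -> 'F_p) :
  (forall x y, lm * x * y + G x + H y = 0) -> lm = 0.
Proof.
move=> h.
have -> : lm = (lm * 1 * 1 + G 1 + H 1) - (lm * 1 * 0 + G 1 + H 0)
             - (lm * 0 * 1 + G 0 + H 1) + (lm * 0 * 0 + G 0 + H 0) by ring.
by rewrite !h; ring.
Qed.

Lemma xy_mod_sep_transpose g : xy_mod_sep g -> xy_mod_sep (fun x y => g y x).
Proof.
by case=> lm [G [H [hlm he]]]; exists lm, H, G; split => // x y; rewrite he; ring.
Qed.

(* A local term (alpha, beta, e) stands for e * f(alpha x, beta y): Alice and
   Bob each preprocess their own input before feeding it to a copy of f. *)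
Definition local_term : Type := (('F_p -> 'F_p) * ('F_p -> 'F_p) * 'F_p)%type.

Definition comb_eval f (s : seq local_term) (x y : 'F_p) : 'F_p :=
  \sum_(t <- s) t.2 * f (t.1.1 x) (t.1.2 y).

Definition xy_comb f (n : nat) : Prop :=
  exists2 s : seq local_term, size s = n & xy_mod_sep (comb_eval f s).

Lemma xy_comb_transpose f n : xy_comb (fun x y => f y x) n -> xy_comb f n.
Proof.
case=> s hs /xy_mod_sep_transpose hxy.
exists [seq (t.1.2, t.1.1, t.2) | t <- s]; first by rewrite size_map.
case: hxy => lm [G [H [hlm he]]]; exists lm, G, H; split => // x y.
by rewrite -he /comb_eval big_map.
Qed.

(* Splitting each term of a combination for the difference f(x + 1, y) - f(x, y)
   into two terms for f doubles the number of terms. *)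
Lemma xy_comb_double f n : xy_comb (fun x y => f (x + 1) y - f x y) n -> xy_comb f (n + n).
Proof.
case=> s hs [lm [G [H [hlm he]]]].
exists ([seq ((fun x => t.1.1 x + 1), t.1.2, t.2) | t <- s]
        ++ [seq (t.1.1, t.1.2, - t.2) | t <- s]).
  by rewrite size_cat !size_map hs.
exists lm, G, H; split => // x y; rewrite -he.
have -> : forall s1 s2, comb_eval f (s1 ++ s2) x y = comb_eval f s1 x y + comb_eval f s2 x y.
  by move=> s1 s2; rewrite /comb_eval big_cat.
rewrite /comb_eval !big_map -big_split; apply: eq_bigr => t _.
change (t.2 * f (t.1.1 x + 1) (t.1.2 y) + (- t.2) * f (t.1.1 x) (t.1.2 y)
        = t.2 * (f (t.1.1 x + 1) (t.1.2 y) - f (t.1.1 x) (t.1.2 y))).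
by rewrite mulNr mulrBr.
Qed.

Lemma xy_comb_of_Delta2 f lam : poly_rep f lam -> Delta lam = 2%N -> xy_comb f 1.
Proof.
move=> h hD; have [lm hlm he] := mixed_part_of_Delta2 h hD.
exists [:: (id, id, 1)] => //.
exists lm, (fun x => f x 0), (fun y => f 0 y - f 0 0); split => // x y.
have -> : comb_eval f [:: (id, id, 1)] x y = f x y by rewrite /comb_eval big_seq1; exact: mul1r.
by rewrite -he; ring.
Qed.

(* Induction on Delta: difference along the variable in which a top-degree mixed
   monomial has degree at least 2; each step halves the number of terms. *)
Lemma xy_comb_of_Delta (hp : prime p) m : forall f lam,
  poly_rep f lam -> Delta lam = m.+2 -> xy_comb f (2 ^ m).
Proof.
elim: m => [|m IH] f lam h hD; first exact: xy_comb_of_Delta2 h hD.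
have Dpos : (0 < Delta lam)%N by rewrite hD.
have [[i0 j0] hm0 top] := Delta_attained Dpos.
rewrite expnS mul2n -addnn; case: (ltnP 1 i0) => [hi0 | hi0].
  apply: xy_comb_double; apply: IH (poly_rep_diff h) _.
  by rewrite (Delta_diff hp hm0 hi0 top) hD.
apply: xy_comb_transpose; apply: xy_comb_double.
apply: IH (poly_rep_diff (poly_rep_transpose h)) _.
have hj0 : (1 < j0)%N by move: top; rewrite hD /=; lia.
have hmT : mixed (fun i j => lam j i) (j0, i0) by rewrite mixed_transpose.
have topT : (j0 + i0)%N = Delta (fun i j => lam j i) by rewrite Delta_transpose addnC.
by rewrite (Delta_diff hp hmT hj0 topT) Delta_transpose hD.
Qed.

End Combinations.

Section LinearFibers.
Variables (p : nat) (n : nat).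
Hypothesis hp : prime p.
Implicit Types (e : 'I_n -> 'F_p) (av : {ffun 'I_n -> 'F_p}).

Definition lin_form e av : 'F_p := \sum_(k < n) e k * av k.

Lemma card_lin_fiber e (k0 : 'I_n) (t : 'F_p) : e k0 != 0 ->
  (p * #|[pred av | lin_form e av == t]|)%N = (p ^ n)%N.
Proof.
move=> ek0; pose fiber t := [pred av | lin_form e av == t].
pose shift c av := [ffun k => av k + (if k == k0 then c else 0)].
have shift_inj c : injective (shift c).
  by move=> u v /ffunP huv; apply/ffunP => k; have := huv k; rewrite !ffunE => /addIr.
have lin_shift c av : lin_form e (shift c av) = lin_form e av + e k0 * c.
  rewrite /lin_form; under eq_bigr do rewrite ffunE mulrDr.
  rewrite big_split; congr (_ + _); rewrite (bigD1 k0) //= eqxx big1 ?addr0 // => k hk.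
  by rewrite (negbTE hk) mulr0.
have same_card t' : #|fiber t'| = #|fiber t|.
  rewrite -!sum1_card (reindex_inj (shift_inj ((t' - t) / e k0))); apply: eq_bigl => av.
  rewrite !inE lin_shift mulrC divfK //.
  by apply/eqP/eqP => [h | ->]; [rewrite -(addrK (t' - t) (lin_form e av)) h | ]; ring.
rewrite -[p in (p * _)%N](card_Fp hp) -sum_nat_const.
rewrite (eq_bigr _ (fun t' _ => esym (same_card t'))).
have -> : (p ^ n)%N = #|{ffun 'I_n -> 'F_p}| by rewrite card_ffun card_Fp // card_ord.
rewrite -sum1_card (partition_big (lin_form e) xpredT) //=.
by apply: eq_bigr => t' _; rewrite sum1_card; apply: eq_card => av.
Qed.

End LinearFibers.

Section Simulation.
Variables (p : nat) (n : nat) (f : 'F_p -> 'F_p -> 'F_p).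
Variables (al be : 'I_n -> 'F_p -> 'F_p).

(* Bob's outputs from n copies of P^f are determined by Alice's: b_k = a_k - f(.,.). *)
Lemma prod_funbox x y (av bv : {ffun 'I_n -> 'F_p}) :
  \prod_(k < n) funbox f (av k) (bv k) (al k x) (be k y) =
  if bv == [ffun k => av k - f (al k x) (be k y)] then (p%:R : rat)^-1 ^+ n else 0.
Proof.
case: eqP => [-> | hne].
  rewrite (eq_bigr (fun _ => (p%:R : rat)^-1)) ?prodr_const ?card_ord // => k _.
  by rewrite /funbox ffunE opprB addrC subrK eqxx.
have [k hk] : exists k, bv k != av k - f (al k x) (be k y).
  apply/existsP; rewrite -negb_forall; apply/negP => /forallP hall; apply: hne.
  by apply/ffunP => k; rewrite ffunE; apply/eqP/hall.
rewrite (bigD1 k) //= /funbox ifF ?mul0r //; apply: contraNF hk => /eqP <-.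
by rewrite opprB addrC subrK.
Qed.

Lemma wiring_prob_local (outA outB : 'F_p -> {ffun 'I_n -> 'F_p} -> 'F_p) a b x y :
  wiring_prob (funbox f) (fun _ : unit => 1) (fun _ x k _ => al k x) (fun _ y k _ => be k y)
    (fun _ => outA) (fun _ => outB) a b x y =
  (p%:R : rat)^-1 ^+ n * #|[pred av | (outA x av == a) &&
     (outB y [ffun k => av k - f (al k x) (be k y)] == b)]|%:R.
Proof.
rewrite /wiring_prob (big_pred1 tt) // mul1r.
under eq_bigr => av _.
  under eq_bigr => bv _ do rewrite prod_funbox.
  rewrite (bigD1 [ffun k => av k - f (al k x) (be k y)]) //= big1 => [|bv hbv]; last first.
    by rewrite (negbTE hbv) if_same.
  rewrite eqxx addr0.
over.
by rewrite -big_mkcond sumr_const mulr_natr.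
Qed.

Hypothesis hp : prime p.

(* A relation  sum_k e_k f(al_k x, be_k y) = lm xy + G x + H y  with lm != 0 and
   some e_k != 0 yields the simulation: Alice outputs lm^-1 (sum_k e_k a_k - G x),
   Bob lm^-1 (sum_k e_k b_k + H y); their difference is xy and Alice's output is
   uniform since a nonzero linear form of the uniform a_k is uniform. *)
Lemma simulates_of_relation (e : 'I_n -> 'F_p) (k0 : 'I_n) lm (G H : 'F_p -> 'F_p) :
  e k0 != 0 -> lm != 0 ->
  (forall x y, \sum_(k < n) e k * f (al k x) (be k y) = lm * x * y + G x + H y) ->
  simulates n (funbox f) (PRbox p).
Proof.
move=> ek0 hlm rel.
pose outA x av := lm^-1 * (lin_form e av - G x).
pose outB y bv := lm^-1 * (lin_form e bv + H y).
exists unit, (fun _ => 1), (fun _ x k _ => al k x), (fun _ y k _ => be k y),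
  (fun _ => outA), (fun _ => outB).
split=> //; first by rewrite (big_pred1 tt).
move=> a b x y; rewrite wiring_prob_local.
have hp0 : (p%:R : rat) != 0 by rewrite pnatr_eq0 -lt0n prime_gt0.
have replyB (av : {ffun 'I_n -> 'F_p}) :
    outB y [ffun k => av k - f (al k x) (be k y)] = outA x av - x * y.
  rewrite /outB /outA; have -> : lin_form e [ffun k => av k - f (al k x) (be k y)]
                                  = lin_form e av - (lm * x * y + G x + H y).
    by rewrite -rel /lin_form -sumrB; apply: eq_bigr => k _; rewrite ffunE mulrBr.
  by field.
have card_fiber : (#|[pred av | outA x av == a]|%:R : rat) = (p%:R)^+n / p%:R.
  have := card_lin_fiber hp (lm * a + G x) ek0.
  rewrite (eq_card (B := [pred av | outA x av == a])) => [/(congr1 (fun m => m%:R : rat)) | av].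
    by rewrite natrM natrX => <-; field.
  by rewrite !inE /outA; apply/eqP/eqP => [-> | <-]; field.
rewrite /PRbox; case: eqP => hab.
  rewrite (eq_card (B := [pred av | outA x av == a])) => [|av]; last first.
    by rewrite !inE replyB; case: eqP => //= ->; apply/eqP; rewrite -hab; ring.
  by rewrite card_fiber mulrA -exprMn mulVf ?expr1n ?mul1r.
rewrite eq_card0 ?mulr0 // => av; rewrite !inE replyB.
by case: eqP => //= ->; apply/eqP => hb; apply: hab; rewrite -hb; ring.
Qed.

End Simulation.

(* An n-term combination for xy gives a simulation with n copies of P^f; some
   coefficient is nonzero because xy itself is not separable. *)
Lemma simulates_of_xy_comb p (hp : prime p) (f : 'F_p -> 'F_p -> 'F_p) n :
  xy_comb f n -> simulates n (funbox f) (PRbox p).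
Proof.
case=> s hs [lm [G [H [hlm he]]]].
pose t0 : local_term p := (id, id, 0); pose e (k : 'I_n) := (nth t0 s k).2.
have rel x y : \sum_(k < n) e k * f ((nth t0 s k).1.1 x) ((nth t0 s k).1.2 y)
               = lm * x * y + G x + H y.
  by rewrite -he /comb_eval (big_nth t0) hs big_mkord.
have [k0 ek0] : exists k0, e k0 != 0.
  apply/existsP; apply: contraT => /existsPn zero; case/eqP: hlm.
  apply: (@xy_not_separable _ lm G H) => x y; rewrite -rel big1 // => k _.
  by have /negPn/eqP -> := zero k; rewrite mul0r.
exact: (simulates_of_relation (al := fun k => (nth t0 s k).1.1)
  (be := fun k => (nth t0 s k).1.2) hp ek0 hlm rel).
Qed.

Theorem mainTheorem3 (p : nat) (hp : prime p) (f : 'F_p -> 'F_p -> 'F_p)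
  (hf : ~ add_separable f) (lam : 'I_p -> 'I_p -> 'F_p) (hlam : poly_rep f lam) :
  (2 <= Delta lam)%N /\ simulates (2 ^ (Delta lam - 2))%N (funbox f) (PRbox p).
Proof.
have Delta2 : (2 <= Delta lam)%N := Delta_ge2 hlam hf.
split=> //; apply: (simulates_of_xy_comb hp).
by apply: (xy_comb_of_Delta hp hlam); rewrite -addn2 subnK.
Qed.
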